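(* Let $\phi$ be a uniformly convex N-function with indices $p^-$ and $p^+$, let $\Omega\subset\mathbb{R}^n$ be open, and let $0<\delta^-\le1\le\delta^+<\infty$, $\delta=(\delta^-,\delta^+)$. Then $$L^{p^-}(\Omega)\cap L^{p^+}(\Omega)\cap L^2(\Omega)\hookrightarrow L^{\phi_\delta}(\Omega)\hookrightarrow L^{p^-}(\Omega)+L^{p^+}(\Omega)+L^2(\Omega),$$ with embedding constants bounded uniformly with respect to $\delta$.
   Context: An N-function is a function $\phi:[0,\infty)\to[0,\infty)$ with right-continuous non-decreasing derivative $\phi'$, $\phi'(0)=0$, $\phi'(t)>0$ for $t>0$, $\phi'(t)\to\infty$, $\phi(t)=\int_0^t\phi'$. It is uniformly convex if $\phi\in C^1([0,\infty))\cap C^2((0,\infty))$ and $p^-:=\inf_{t>0}\frac{\phi''(t)t}{\phi'(t)}+1>1$, $p^+:=\sup_{t>0}\frac{\phi''(t)t}{\phi'(t)}+1<\infty$. The truncated N-function $\phi_\delta$ is defined by $\phi_\delta'(t):=\frac{\phi'(\max(\delta^-,\min(t,\delta^+)))}{\max(\delta^-,\min(t,\delta^+))}\,t$, $\phi_\delta(t)=\int_0^t\phi_\delta'$. $L^{\phi_\delta}(\Omega)$ is the Orlicz space with Luxemburg norm $\|v\|=\inf\{\lambda>0:\int_\Omega\phi_\delta(|v|/\lambda)\le1\}$. Intersections of Lebesgue spaces carry the maximum of the norms, sums carry the infimum over decompositions of the sum of the norms. *)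

From HB Require Import structures.
From mathcomp Require Import all_boot all_order all_algebra.
From mathcomp Require Import all_classical all_reals all_analysis.
Set Implicit Arguments. Unset Strict Implicit. Unset Printing Implicit Defensive.
Import Order.TTheory GRing.Theory Num.Def Num.Theory.
Import numFieldNormedType.Exports.
Local Open Scope classical_set_scope.
Local Open Scope ring_scope.

Section Defs.
Context {R : realType}.

(* Only values on [0,oo) matter. *)
Definition Nfunction (phi dphi : R -> R) : Prop :=
  [/\ (forall t, 0 <= t -> dphi x @[x --> t^'+] --> dphi t),
      (forall s t, 0 <= s -> s <= t -> dphi s <= dphi t),
      dphi 0 = 0,
      (forall t, 0 < t -> 0 < dphi t) /\
        (dphi x @[x --> +oo] --> +oo) &
      (forall t, 0 <= t ->
         (phi t)%:E = (\int[lebesgue_measure]_(s in `[0%R, t]) (dphi s)%:E)%E)].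

Definition index_ratio (dphi : R -> R) (t : R) : R :=
  (derive1 dphi t) * t / dphi t.

Definition p_minus (dphi : R -> R) : R :=
  inf [set index_ratio dphi t | t in `]0, +oo[] + 1.
Definition p_plus (dphi : R -> R) : R :=
  sup [set index_ratio dphi t | t in `]0, +oo[] + 1.

(* Uniform convexity of the N-function phi = int_0^. dphi:
   phi in C^1([0,oo)) (i.e. dphi continuous on [0,oo)),
   phi in C^2((0,oo)) (i.e. dphi continuously differentiable on (0,oo)),
   p^- > 1 and p^+ < oo (the ratio set is bounded above). *)
Definition uniformly_convex (dphi : R -> R) : Prop :=
  [/\ {within `[0, +oo[, continuous dphi},
      (forall t, 0 < t -> derivable dphi t 1),
      {in `]0, +oo[, continuous (derive1 dphi)},
      1 < p_minus dphi &
      has_ubound [set index_ratio dphi t | t in `]0, +oo[] ].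

Definition clampd (dm dp t : R) : R := Num.max dm (Num.min t dp).

Definition dphi_delta (dphi : R -> R) (dm dp : R) (t : R) : R :=
  dphi (clampd dm dp t) / clampd dm dp t * t.

Definition phi_delta (dphi : R -> R) (dm dp : R) (t : R) : \bar R :=
  (\int[lebesgue_measure]_(s in `[0%R, t]) (dphi_delta dphi dm dp s)%:E)%E.

Definition luxemburg {d} {T : measurableType d} (mu : {measure set T -> \bar R})
    (Omega : set T) (Phi : R -> \bar R) (v : T -> R) : \bar R :=
  ereal_inf [set lam%:E | lam in
    [set lam : R | 0 < lam /\
       (\int[mu]_(x in Omega) Phi (`|v x| / lam)%R <= 1)%E]].

Definition LpO {d} {T : measurableType d} (mu : {measure set T -> \bar R})
    (Omega : set T) (mO : measurable Omega) (p : R) (v : T -> R) : \bar R :=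
  Lnorm (mrestr mu mO) p%:E (EFin \o v).

Definition cap3_norm {d} {T : measurableType d} (mu : {measure set T -> \bar R})
    (Omega : set T) (mO : measurable Omega) (p1 p2 p3 : R) (v : T -> R) : \bar R :=
  Order.max (LpO mu mO p1 v) (Order.max (LpO mu mO p2 v) (LpO mu mO p3 v)).

Definition sum3_norm {d} {T : measurableType d} (mu : {measure set T -> \bar R})
    (Omega : set T) (mO : measurable Omega) (p1 p2 p3 : R) (v : T -> R) : \bar R :=
  ereal_inf [set e : \bar R | exists v1 v2 v3 : T -> R,
    [/\ measurable_fun Omega v1, measurable_fun Omega v2,
        measurable_fun Omega v3,
        (forall x, Omega x -> v x = v1 x + v2 x + v3 x) &
        e = (LpO mu mO p1 v1 + LpO mu mO p2 v2 + LpO mu mO p3 v3)%E]].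
End Defs.

(* For a = p^- - 1 (resp. a = p^+ - 1) the function phi'(t) t^(-a) is nondecreasing
   (resp. nonincreasing), its logarithmic derivative being (index_ratio - a)/t; comparing with
   t = 1 gives phi'(1) min(t^(p^- - 1), t^(p^+ - 1)) <= phi'(t) <= phi'(1) max(...).  The
   truncation point clampd t always lies between t and 1, so phi_delta' obeys the same bounds
   with t as a third power, whatever delta is; integrating, phi_delta(s) <~ s^p- + s^p+ + s^2
   and phi_delta(2s) >~ min(s^p-, s^p+, s^2), with constants depending on phi'(1) only.  The
   upper bound controls the Luxemburg norm by the largest of the three Lebesgue norms.  For the
   lower bound, Omega is split according to which power of |v|/(2 lam) is smallest, and each
   piece of v lies in the corresponding Lebesgue space with norm <~ lam. *)

From HB Require Import structures.
From mathcomp Require Import all_boot all_order all_algebra.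
From mathcomp Require Import all_classical all_reals all_analysis.
From mathcomp Require Import ring lra measurable_realfun.
Set Implicit Arguments. Unset Strict Implicit. Unset Printing Implicit Defensive.
Import Order.TTheory GRing.Theory Num.Def Num.Theory.
Import numFieldNormedType.Exports.
Local Open Scope classical_set_scope.
Local Open Scope ring_scope.

Section powR_inequalities.
Context {R : realType}.
Implicit Types a b c s x y z N C : R.

Lemma powRD1 x a : 0 < x -> x `^ (a + 1) = x `^ a * x.
Proof. by move=> x0; rewrite powRD ?powRr1 ?ltW // (gt_eqF x0) implybT. Qed.

Lemma ge0_powRD1 x a : 0 <= x -> 0 <= a -> x `^ (a + 1) = x `^ a * x.
Proof.
by move=> x0 a0; rewrite powRD ?powRr1 // gt_eqF ?implyFb // ltr_wpDl.
Qed.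

Lemma powR_min_max x y z b : 0 < x -> 0 < y -> Num.min x y <= z <= Num.max x y ->
  Num.min (x `^ b) (y `^ b) <= z `^ b <= Num.max (x `^ b) (y `^ b).
Proof.
wlog xy : x y / x <= y.
  move=> H x0 y0; case/orP: (le_total x y) => [xy|yx]; first exact: H.
  rewrite minC maxC [Num.min (x `^ b) _]minC [Num.max (x `^ b) _]maxC.
  exact: H.
move=> x0 y0; rewrite (min_idPl xy) (max_idPr xy) => /andP[xz zy].
have z0 : 0 < z := lt_le_trans x0 xz.
have powE u : 0 < u -> u `^ b = expR (b * ln u) by move=> u0; rewrite /powR gt_eqF.
have lnxz : ln x <= ln z by rewrite ler_ln ?posrE.
have lnzy : ln z <= ln y by rewrite ler_ln ?posrE.
rewrite ge_min le_max !powE // !ler_expR.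
have [b0|b0] := leP 0 b.
  by rewrite (ler_wpM2l b0 lnxz) (ler_wpM2l b0 lnzy) orbT.
by rewrite (ler_wnM2l (ltW b0) lnzy) (ler_wnM2l (ltW b0) lnxz) orbT.
Qed.

Lemma powR_mul_min_max s c a : 0 < s -> Num.min s 1 <= c <= Num.max s 1 ->
  Num.min (s `^ a) s <= c `^ (a - 1) * s <= Num.max (s `^ a) s.
Proof.
move=> s0 /(@powR_min_max s 1 c (a - 1) s0 ltr01); rewrite powR1.
have sE : s `^ (a - 1) * s = s `^ a by rewrite -powRD1 // subrK.
have -> : Num.min (s `^ a) s = Num.min (s `^ (a - 1)) 1 * s.
  by rewrite minr_pMl ?(ltW s0) // sE mul1r.
have -> : Num.max (s `^ a) s = Num.max (s `^ (a - 1)) 1 * s.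
  by rewrite maxr_pMl ?(ltW s0) // sE mul1r.
by rewrite !ler_pM2r.
Qed.

Lemma powR_le_mul_powR_div a c b : 0 <= a -> 0 < c <= 1 -> 1 <= b ->
  a `^ b <= c * (a / c) `^ b.
Proof.
move=> a0 /andP[c0 c1] b1; have ci0 : 0 <= c^-1 by rewrite invr_ge0 ltW.
rewrite powRM // mulrCA -[X in X <= _]mulr1 ler_wpM2l ?powR_ge0 //.
apply: (@le_trans _ _ (c * c^-1)); first by rewrite mulfV ?gt_eqF.
by rewrite ler_pM2l // le1r_powR // invf_ge1.
Qed.

Lemma invr_powR_mul_le N x C b :
  0 <= N -> 1 <= C -> 1 <= b -> C * N < x -> x^-1 `^ b * N `^ b <= C^-1.
Proof.
move=> N0 C1 b1 CNx; have C0 : 0 < C := lt_le_trans ltr01 C1.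
have x0 : 0 < x := le_lt_trans (mulr_ge0 (ltW C0) N0) CNx.
have NxC : x^-1 * N <= C^-1 by rewrite mulrC ler_pdivrMr // ler_pdivlMl // ltW.
rewrite -powRM ?invr_ge0 ?(ltW x0) //.
apply: le_trans (ge1r_powR _ b1); last by rewrite invr_gt0 C0 invf_le1.
have Nx0 : 0 <= x^-1 * N by rewrite mulr_ge0 // invr_ge0 ltW.
by rewrite ge0_ler_powR ?nnegrE ?(le_trans ler01 b1) ?(le_trans Nx0 NxC).
Qed.

End powR_inequalities.

Lemma clampd_gt0 {R : realType} (dm dp t : R) : 0 < dm -> 0 < clampd dm dp t.
Proof. by move=> dm0; rewrite /clampd lt_max dm0. Qed.

Lemma clampd_min_max {R : realType} (dm dp t : R) : dm <= 1 <= dp ->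
  Num.min t 1 <= clampd dm dp t <= Num.max t 1.
Proof.
move=> /andP[dm1 dp1]; rewrite /clampd; apply/andP; split.
  rewrite le_max; apply/orP; right.
  by rewrite le_min ge_min lexx ge_min dp1 orbT.
by rewrite ge_max le_max dm1 orbT ge_min le_max lexx.
Qed.

Section integral_comparison.
Local Open Scope ereal_scope.
Context d (T : measurableType d) (R : realType).
Variable mu : {measure set T -> \bar R}.

(* Unlike [ge0_le_integral], no measurability is needed: both sides are suprema
   over the simple functions below the integrand. *)
Lemma ge0_le_integral_restrict (D1 D2 : set T) (f1 f2 : T -> \bar R) :
  (forall x, 0 <= (f1 \_ D1) x) -> (forall x, (f1 \_ D1) x <= (f2 \_ D2) x) ->
  \int[mu]_(x in D1) f1 x <= \int[mu]_(x in D2) f2 x.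
Proof.
move=> f10 f12.
have f20 x : D2 x -> 0 <= f2 x.
  by move=> D2x; have := le_trans (f10 x) (f12 x); rewrite patchE mem_set.
rewrite ge0_integralE; last by move=> x D1x; have := f10 x; rewrite patchE mem_set.
rewrite ge0_integralE //.
apply: le_ereal_sup => _ [h /= hf1 <-]; exists h => //= x.
exact: le_trans (hf1 x) (f12 x).
Qed.

Lemma ge0_integral_mrestr (D : set T) (mD : measurable D) (f : T -> \bar R) :
  measurable_fun [set: T] f -> (forall x, 0 <= f x) ->
  \int[mrestr mu mD]_x f x = \int[mu]_(x in D) f x.
Proof.
move=> mf f0.
rewrite -(setUv D) ge0_integral_setU //; last 3 first.
- exact: measurableC.
- by rewrite setUv.
- by apply/disj_set2P; rewrite setICr.
rewrite (@null_set_integral _ _ _ (mrestr mu mD) (~` D)); last 3 first.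
- exact: measurableC.
- exact: measurable_funS mf.
- by rewrite /= /mrestr setICl measure0.
rewrite adde0; apply: eq_measure_integral => A mA AD.
by rewrite /= /mrestr setIidl.
Qed.

End integral_comparison.

Section interval_integral.
Local Open Scope ereal_scope.
Context {R : realType}.
Implicit Types (a b m M : R) (f : R -> R).

Let lebesgue_measure_itvcc a b : (a <= b)%R ->
  (@lebesgue_measure R) `[a, b] = (b - a)%:E.
Proof.
rewrite lebesgue_measure_itv /= lte_fin le_eqVlt => /predU1P[->|->//].
by rewrite ltxx subrr.
Qed.

Lemma integral_itv_le_cst f a b M : (a <= b)%R ->
  (forall s, (a <= s <= b)%R -> (0 <= f s <= M)%R) ->
  \int[lebesgue_measure]_(s in `[a, b]) (f s)%:E <= (M * (b - a))%:E.
Proof.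
move=> ab fM.
apply: (@le_trans _ _ (\int[lebesgue_measure]_(s in `[a, b]) (cst M%:E) s)).
  apply: ge0_le_integral_restrict => x; rewrite !patchE; case: ifPn => // /set_mem;
    by rewrite /= in_itv /= => /fM /andP[f0 fM']; rewrite lee_fin.
by rewrite integral_cst //= lebesgue_measure_itvcc.
Qed.

Lemma integral_itv_ge_cst f a m b M : (a <= m <= b)%R -> (0 <= M)%R ->
  (forall s, (a <= s <= b)%R -> (0 <= f s)%R) ->
  (forall s, (m <= s <= b)%R -> (M <= f s)%R) ->
  (M * (b - m))%:E <= \int[lebesgue_measure]_(s in `[a, b]) (f s)%:E.
Proof.
move=> /andP[am mb] M0 f0 fM.
rewrite EFinM -lebesgue_measure_itvcc // -(@integral_cst _ _ _ lebesgue_measure) //.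
apply: ge0_le_integral_restrict => x; rewrite !patchE.
  by case: ifPn; rewrite // lee_fin.
case: ifPn => [/set_mem/=|_].
  rewrite in_itv /= => /andP[mx xb].
  by rewrite mem_set /= ?in_itv /= ?(le_trans am mx) // lee_fin fM ?mx.
case: ifPn => // /set_mem; rewrite /= in_itv /= => /f0.
by rewrite lee_fin.
Qed.

End interval_integral.

Section index_growth.
Context {R : realType}.
Variable dphi : R -> R.
Hypothesis dphi_gt0 : forall t, 0 < t -> 0 < dphi t.
Hypothesis dphi_derivable : forall t, 0 < t -> derivable dphi t 1.

Lemma is_derive_dphi_mul_powRN (a x : R) : 0 < x ->
  is_derive x 1 (fun y => dphi y * y `^ (- a))
    (x `^ (- a - 1) * ((index_ratio dphi x - a) * dphi x)).
Proof.
move=> x0; apply: (is_derive_eq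
  (is_deriveM (derivableP (dphi_derivable x0)) (is_derive1_powR (- a) x0))).
rewrite /index_ratio derive1E /GRing.scale /=.
have -> : x `^ (- a) = x `^ (- a - 1) * x by rewrite -powRD1 ?subrK.
by field; rewrite gt_eqF ?dphi_gt0.
Qed.

Let dphi_mul_powRN_continuous (a s t : R) : 0 < s ->
  {within `[s, t], continuous (fun y => dphi y * y `^ (- a))}.
Proof.
move=> s0; apply: continuous_in_subspaceT => x.
rewrite inE /= in_itv /= => /andP[sx _]; have x0 := lt_le_trans s0 sx.
apply: differentiable_continuous; apply/derivable1_diffP.
by case: (is_derive_dphi_mul_powRN a x0).
Qed.

Lemma dphi_mul_powRN_nondecreasing (a s t : R) :
  (forall x, 0 < x -> a <= index_ratio dphi x) -> 0 < s -> s <= t ->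
  dphi s * s `^ (- a) <= dphi t * t `^ (- a).
Proof.
move=> ratio_ge s0 st.
apply: (@ger0_derive1_le_cc _ (fun y => dphi y * y `^ (- a)) s t) => //; last 3 first.
- exact: dphi_mul_powRN_continuous.
- by rewrite in_itv /= lexx st.
- by rewrite in_itv /= lexx st.
- move=> x; rewrite in_itv /= => /andP[sx _].
  by case: (is_derive_dphi_mul_powRN a (lt_trans s0 sx)).
- move=> x; rewrite in_itv /= => /andP[sx _]; have x0 := lt_trans s0 sx.
  rewrite derive1E; have [_ ->] := is_derive_dphi_mul_powRN a x0.
  by rewrite mulr_ge0 ?powR_ge0 // mulr_ge0 ?subr_ge0 ?ratio_ge // ltW ?dphi_gt0.
Qed.

Lemma dphi_mul_powRN_nonincreasing (a s t : R) :
  (forall x, 0 < x -> index_ratio dphi x <= a) -> 0 < s -> s <= t ->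
  dphi t * t `^ (- a) <= dphi s * s `^ (- a).
Proof.
move=> ratio_le s0 st.
apply: (@ler0_derive1_le_cc _ (fun y => dphi y * y `^ (- a)) s t) => //; last 3 first.
- exact: dphi_mul_powRN_continuous.
- by rewrite in_itv /= lexx st.
- by rewrite in_itv /= lexx st.
- move=> x; rewrite in_itv /= => /andP[sx _].
  by case: (is_derive_dphi_mul_powRN a (lt_trans s0 sx)).
- move=> x; rewrite in_itv /= => /andP[sx _]; have x0 := lt_trans s0 sx.
  rewrite derive1E; have [_ ->] := is_derive_dphi_mul_powRN a x0.
  by rewrite mulr_ge0_le0 ?powR_ge0 // mulr_le0_ge0 ?subr_le0 ?ratio_le // ltW ?dphi_gt0.
Qed.

Variables am ap : R.
Hypothesis ratio_ge : forall t, 0 < t -> am <= index_ratio dphi t.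
Hypothesis ratio_le : forall t, 0 < t -> index_ratio dphi t <= ap.

Let K := dphi 1.
Let K_gt0 : 0 < K. Proof. exact: dphi_gt0. Qed.

Lemma dphi_le_max_powR c : 0 < c -> dphi c <= K * Num.max (c `^ am) (c `^ ap).
Proof.
move=> c0; rewrite maxr_pMr ?(ltW K_gt0) // le_max.
have [c1|c1] := leP c 1; apply/orP; [left|right].
- have := dphi_mul_powRN_nondecreasing ratio_ge c0 c1.
  by rewrite powR1 mulr1 powRN ler_pdivrMr ?powR_gt0.
- have := dphi_mul_powRN_nonincreasing ratio_le ltr01 (ltW c1).
  by rewrite powR1 mulr1 powRN ler_pdivrMr ?powR_gt0.
Qed.

Lemma min_powR_le_dphi c : 0 < c -> K * Num.min (c `^ am) (c `^ ap) <= dphi c.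
Proof.
move=> c0; rewrite minr_pMr ?(ltW K_gt0) // ge_min.
have [c1|c1] := leP c 1; apply/orP; [right|left].
- have := dphi_mul_powRN_nonincreasing ratio_le c0 c1.
  by rewrite powR1 mulr1 powRN ler_pdivlMr ?powR_gt0.
- have := dphi_mul_powRN_nondecreasing ratio_ge ltr01 (ltW c1).
  by rewrite powR1 mulr1 powRN ler_pdivlMr ?powR_gt0.
Qed.

Variables dm dp : R.
Hypothesis dm_gt0 : 0 < dm.
Hypothesis dm_le1 : dm <= 1.
Hypothesis dp_ge1 : 1 <= dp.

Let g := dphi_delta dphi dm dp.

Let dphi_delta_powR s a : 0 < s -> let c := clampd dm dp s in
  [/\ 0 < c, Num.min s 1 <= c <= Num.max s 1 &
      g s = dphi c / c `^ a * (c `^ (a - 1) * s)].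
Proof.
move=> s0 c; have c0 : 0 < c := clampd_gt0 dp s dm_gt0.
split=> //; first by rewrite clampd_min_max ?dm_le1.
have -> : c `^ a = c `^ (a - 1) * c by rewrite -powRD1 // subrK.
by rewrite /g /dphi_delta -/c; field; rewrite !gt_eqF ?powR_gt0.
Qed.

Lemma dphi_delta_le s : 0 <= s -> g s <= K * (s `^ am + s `^ ap + s).
Proof.
rewrite le_eqVlt => /predU1P[<-|s0].
  by rewrite /g /dphi_delta mulr0 mulr_ge0 ?(ltW K_gt0) // !addr_ge0 ?powR_ge0.
have [c0 _ _] := dphi_delta_powR am s0; set c := clampd dm dp s in c0 *.
have step a : dphi c <= K * c `^ a -> g s <= K * Num.max (s `^ a) s.
  have [_ hc ->] := dphi_delta_powR a s0; rewrite -ler_pdivrMr ?powR_gt0 // => ha.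
  by apply: ler_pM => //; [rewrite divr_ge0 ?powR_ge0 ?ltW ?dphi_gt0 |
    rewrite mulr_ge0 ?powR_ge0 ?ltW | case/andP: (powR_mul_min_max a s0 hc)].
have sam0 := powR_ge0 s am; have sap0 := powR_ge0 s ap.
have := dphi_le_max_powR c0; rewrite maxr_pMr ?(ltW K_gt0) // le_max.
case/orP=> /step /le_trans-> //; rewrite ler_pM2l // ge_max; apply/andP; split; lra.
Qed.

Lemma dphi_delta_ge s : 0 <= s -> K * Num.min (s `^ am) (Num.min (s `^ ap) s) <= g s.
Proof.
rewrite le_eqVlt => /predU1P[<-|s0].
  by rewrite /g /dphi_delta mulr0 pmulr_rle0 // !ge_min lexx !orbT.
have [c0 _ _] := dphi_delta_powR am s0; set c := clampd dm dp s in c0 *.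
have step a : K * c `^ a <= dphi c -> K * Num.min (s `^ a) s <= g s.
  have [_ hc ->] := dphi_delta_powR a s0; rewrite -ler_pdivlMr ?powR_gt0 // => ha.
  apply: ler_pM => //; first exact: ltW.
    by rewrite le_min !powR_ge0 ltW.
  by case/andP: (powR_mul_min_max a s0 hc).
have := min_powR_le_dphi c0; rewrite minr_pMr ?(ltW K_gt0) // ge_min.
case/orP=> /step; apply: le_trans; rewrite ler_pM2l // le_min !ge_min !lexx /=;
  by rewrite ?orbT.
Qed.

Hypothesis am_ge0 : 0 <= am.

Let ap_ge0 : 0 <= ap.
Proof. exact: le_trans am_ge0 (le_trans (ratio_ge ltr01) (ratio_le ltr01)). Qed.

Lemma dphi_delta_ge0 s : 0 <= s -> 0 <= g s.
Proof.
move=> s0; apply: le_trans (dphi_delta_ge s0).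
by rewrite mulr_ge0 ?(ltW K_gt0) // !le_min !powR_ge0 s0.
Qed.

Lemma phi_delta_le t : 0 <= t ->
  (phi_delta dphi dm dp t <= (K * (t `^ (am + 1) + t `^ (ap + 1) + t `^ 2))%:E)%E.
Proof.
move=> t0.
have -> : K * (t `^ (am + 1) + t `^ (ap + 1) + t `^ 2) =
          K * (t `^ am + t `^ ap + t) * (t - 0).
  by rewrite subr0 !ge0_powRD1 // powRr1 //; ring.
apply: integral_itv_le_cst => // s /andP[s0 st]; rewrite dphi_delta_ge0 //=.
have powR_le a : 0 <= a -> s `^ a <= t `^ a.
  by move=> a0; rewrite ge0_ler_powR ?nnegrE // (le_trans s0 st).
apply: le_trans (dphi_delta_le s0) _.
by rewrite ler_pM2l // !lerD ?powR_le.
Qed.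

Lemma phi_delta_ge t : 0 <= t ->
  ((K * Num.min ((t / 2) `^ (am + 1)) (Num.min ((t / 2) `^ (ap + 1)) ((t / 2) `^ 2)))%:E
     <= phi_delta dphi dm dp t)%E.
Proof.
move=> t0; set h := t / 2.
have h0 : 0 <= h by rewrite divr_ge0.
have ht : h <= t by rewrite /h ler_pdivrMr // ler_peMr // ler1n.
have -> : K * Num.min (h `^ (am + 1)) (Num.min (h `^ (ap + 1)) (h `^ 2)) =
          K * Num.min (h `^ am) (Num.min (h `^ ap) h) * (t - h).
  rewrite (_ : t - h = h); last by rewrite /h; field.
  by rewrite -mulrA !minr_pMl // !ge0_powRD1 // powRr1.
apply: integral_itv_ge_cst; rewrite ?h0 ?ht //.
- by rewrite mulr_ge0 ?(ltW K_gt0) // !le_min !powR_ge0.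
- by move=> s /andP[s0 _]; exact: dphi_delta_ge0.
move=> s /andP[hs st]; have s0 := le_trans h0 hs.
apply: le_trans (dphi_delta_ge s0); rewrite ler_pM2l //.
have powR_le a : 0 <= a -> h `^ a <= s `^ a by move=> a0; rewrite ge0_ler_powR.
by rewrite !le_min2 ?powR_le.
Qed.

End index_growth.

Section orlicz_lebesgue.
Local Open Scope ereal_scope.
Context d (T : measurableType d) (R : realType).
Variables (mu : {measure set T -> \bar R}) (Omega : set T) (mO : measurable Omega).
Implicit Types (u v : T -> R) (Phi : R -> \bar R).

Lemma measurable_powR_norm (D : set T) u (p : R) : measurable_fun D u ->
  measurable_fun D (fun x => (`|u x| `^ p)%:E).
Proof.
move=> mu_; apply/measurable_EFinP; apply: (measurableT_comp (measurable_powR p)).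
exact: measurableT_comp (@normr_measurable R setT) mu_.
Qed.

Lemma LpO_ge0 p u : 0 <= LpO mu mO p u.
Proof. exact: Lnorm_ge0. Qed.

Lemma cap3_norm_ge0 p1 p2 p3 v : 0 <= cap3_norm mu mO p1 p2 p3 v.
Proof. by rewrite !le_max LpO_ge0. Qed.

Lemma luxemburg_ge0 Phi v : 0 <= luxemburg mu Omega Phi v.
Proof. by apply: le_ereal_inf_tmp => _ [lam [lam0 _] <-]; rewrite lee_fin ltW. Qed.

Let LpOE p u : LpO mu mO p u = (\int[mrestr mu mO]_x (`|u x| `^ p)%:E) `^ p^-1.
Proof. by rewrite /LpO unlock. Qed.

Lemma integral_powR_le p u (N : R) : (0 < p)%R -> measurable_fun Omega u ->
  LpO mu mO p u <= N%:E -> \int[mu]_(x in Omega) (`|u x| `^ p)%:E <= (N `^ p)%:E.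
Proof.
move=> p0 mu_ uN; have L0 := LpO_ge0 p u.
have L_fin : LpO mu mO p u \is a fin_num by rewrite ge0_fin_numE // (le_lt_trans uN) ?ltey.
have LN : (fine (LpO mu mO p u) <= N)%R by rewrite -lee_fin fineK.
apply: (@le_trans _ _ (LpO mu mO p u `^ p)); last first.
  rewrite -(fineK L_fin) poweR_EFin lee_fin ge0_ler_powR ?nnegrE ?fine_ge0 ?(ltW p0) //.
  exact: le_trans (fine_ge0 L0) LN.
rewrite LpOE -poweRrM mulVf ?gt_eqF // poweRe1; last first.
  by apply: integral_ge0 => x _; rewrite lee_fin powR_ge0.
pose w := u \_ Omega.
have mw : measurable_fun setT w by exact/(measurable_restrictT _ _).1.
rewrite (eq_integral (fun x => (`|w x| `^ p)%:E)); last first.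
  by move=> x xO; rewrite /w patchE xO.
rewrite -ge0_integral_mrestr; last 2 first.
- exact: measurable_powR_norm.
- by move=> x; rewrite lee_fin powR_ge0.
apply: ge0_le_integral_restrict => x; rewrite !patch_setT lee_fin ?powR_ge0 //.
by rewrite /w patchE; case: ifPn => // _; rewrite normr0 powR0 ?gt_eqF ?powR_ge0.
Qed.

Lemma LpO_le p u (k : R) : (0 < p)%R -> (0 <= k)%R -> measurable_fun setT u ->
  \int[mu]_(x in Omega) (`|u x| `^ p)%:E <= (k `^ p)%:E -> LpO mu mO p u <= k%:E.
Proof.
move=> p0 k0 mu_ uk.
rewrite LpOE ge0_integral_mrestr; last 2 first.
- exact: measurable_powR_norm.
- by move=> x; rewrite lee_fin powR_ge0.
set I := \int[mu]_(x in Omega) _ in uk *.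
have I0 : 0 <= I by apply: integral_ge0 => x _; rewrite lee_fin powR_ge0.
have I_fin : I \is a fin_num by rewrite ge0_fin_numE // (le_lt_trans uk) ?ltey.
rewrite -(fineK I_fin) poweR_EFin lee_fin.
rewrite -[leRHS](powRr1 k0) -(mulfV (lt0r_neq0 p0)) powRrM.
by rewrite ge0_ler_powR ?nnegrE ?invr_ge0 ?(ltW p0) ?fine_ge0 ?powR_ge0 // -lee_fin fineK.
Qed.

Lemma LpO_restrict_le Phi v (lam beta r : R) (E : set T) :
  measurable E -> E `<=` Omega -> measurable_fun Omega v ->
  (0 < r)%R -> (0 < beta)%R ->
  (forall x, Omega x -> 0 <= Phi (`|v x| / lam)%R) ->
  \int[mu]_(x in Omega) Phi (`|v x| / lam)%R <= 1 ->
  (forall x, E x -> (`|v x| `^ r)%:E <= (beta `^ r)%:E * Phi (`|v x| / lam)%R) ->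
  LpO mu mO r (v \_ E) <= beta%:E.
Proof.
move=> mE EO mv r0 beta0 Phi0 int_le1 vE.
have mvE : measurable_fun setT (v \_ E).
  exact/(measurable_restrictT _ _).1/(measurable_funS mO EO mv).
apply: LpO_le => //; first exact: ltW.
have br0 : (0 < beta `^ r)%R by rewrite powR_gt0.
rewrite -[leRHS]mule1 -lee_pdivrMl // -ge0_integralZl //; last 2 first.
- exact: measurable_funS measurableT (subsetT _) (measurable_powR_norm r mvE).
- by rewrite lee_fin invr_ge0 ltW.
apply: le_trans int_le1; apply: ge0_le_integral_restrict => x; rewrite !patchE.
  by case: ifPn => // _; rewrite mule_ge0 // lee_fin ?invr_ge0 ?powR_ge0 ?ltW.
case: ifPn => // /set_mem Ox; case: ifPn => [/set_mem Ex|_].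
  by rewrite lee_pdivrMl //; exact: vE.
by rewrite /point /= normr0 powR0 ?gt_eqF // mule0 Phi0.
Qed.

Lemma luxemburg_le Phi v (b : R) : (0 <= b)%R ->
  (forall lam, (b < lam)%R -> \int[mu]_(x in Omega) Phi (`|v x| / lam)%R <= 1) ->
  luxemburg mu Omega Phi v <= b%:E.
Proof.
move=> b0 hb; apply/lee_addgt0Pr => eps eps0; apply: ereal_inf_lbound.
exists (b + eps)%R => //; split; first exact: ltr_wpDl.
by apply: hb; rewrite ltrDl.
Qed.

Lemma le_luxemburg Phi v (X : \bar R) (k : R) : (0 < k)%R ->
  (forall lam, (0 < lam)%R -> \int[mu]_(x in Omega) Phi (`|v x| / lam)%R <= 1 ->
     X <= (k * lam)%:E) ->
  X <= k%:E * luxemburg mu Omega Phi v.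
Proof.
move=> k0 hX; set L := luxemburg _ _ _ _; have L0 : 0 <= L := luxemburg_ge0 Phi v.
have [->|Loo] := eqVneq L +oo; first by rewrite mulry gtr0_sg // mul1e leey.
have L_fin : L \is a fin_num by rewrite ge0_fin_numE // ltey.
apply/lee_addgt0Pr => eps eps0.
have epsk0 : (0 < eps / k)%R by rewrite divr_gt0.
have [_ [lam [lam0 hlam] <-] /= lamL] := lb_ereal_inf_adherent epsk0 L_fin.
apply: le_trans (hX _ lam0 hlam) _.
rewrite -(fineK L_fin) -EFinM -EFinD lee_fin.
have : (lam < fine L + eps / k)%R by rewrite -lte_fin EFinD fineK.
rewrite -(ltr_pM2l k0) mulrDr mulrCA divff ?gt_eqF // mulr1.
exact: ltW.
Qed.

Lemma luxemburg_le_cap3_norm Phi (K p1 p2 p3 : R) v :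
  (1 <= p1)%R -> (1 <= p2)%R -> (1 <= p3)%R -> (0 < K)%R ->
  (forall t, (0 <= t)%R -> 0 <= Phi t) ->
  (forall t, (0 <= t)%R -> Phi t <= (K * (t `^ p1 + t `^ p2 + t `^ p3))%:E) ->
  measurable_fun Omega v ->
  luxemburg mu Omega Phi v <= (Num.max 1 (3 * K))%R%:E * cap3_norm mu mO p1 p2 p3 v.
Proof.
move=> p11 p21 p31 K0 Phi0 PhiU mv; set C := (Num.max 1 (3 * K))%R.
have C1 : (1 <= C)%R by rewrite le_max lexx.
have C0 : (0 < C)%R := lt_le_trans ltr01 C1.
set N := cap3_norm _ _ _ _ _ _; have N0 : 0 <= N := cap3_norm_ge0 p1 p2 p3 v.
have [->|Noo] := eqVneq N +oo; first by rewrite mulry gtr0_sg ?mul1e ?leey.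
have N_fin : N \is a fin_num by rewrite ge0_fin_numE // ltey.
have fN0 : (0 <= fine N)%R by rewrite fine_ge0.
rewrite -(fineK N_fin) -EFinM; apply: luxemburg_le => [|lam CNlam].
  by rewrite mulr_ge0 // ltW.
have lam0 : (0 < lam)%R by rewrite (le_lt_trans _ CNlam) // mulr_ge0 // ltW.
pose c q := (K * lam^-1 `^ q)%R.
have c0 q : 0 <= (c q)%:E by rewrite lee_fin mulr_ge0 ?powR_ge0 ?ltW.
have mv_ q := measurable_powR_norm q mv.
have f0 q x : 0 <= (`|v x| `^ q)%:E by rewrite lee_fin powR_ge0.
have int_c q : (1 <= q)%R -> LpO mu mO q v <= (fine N)%:E ->
    \int[mu]_(x in Omega) ((c q)%:E * (`|v x| `^ q)%:E) <= (c q * fine N `^ q)%:E.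
  move=> q1 vN; rewrite ge0_integralZl // [leRHS]EFinM; apply: lee_wpmul2l => //.
  exact: integral_powR_le (lt_le_trans ltr01 q1) mv vN.
apply: (@le_trans _ _ (\int[mu]_(x in Omega) ((c p1)%:E * (`|v x| `^ p1)%:E
    + (c p2)%:E * (`|v x| `^ p2)%:E + (c p3)%:E * (`|v x| `^ p3)%:E))).
  apply: ge0_le_integral_restrict => x; rewrite !patchE; case: ifPn => // _.
    by apply: Phi0; rewrite divr_ge0 // ltW.
  apply: le_trans (PhiU _ _) _; first by rewrite divr_ge0 // ltW.
  rewrite -!EFinM -!EFinD lee_fin /c !powRM ?invr_ge0 ?(ltW lam0) //.
  by rewrite le_eqVlt; apply/predU1P; left; ring.
rewrite !ge0_integralD //; last 8 first.
- by move=> x _; rewrite mule_ge0.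
- exact: emeasurable_funM.
- by move=> x _; rewrite mule_ge0.
- exact: emeasurable_funM.
- by move=> x _; rewrite !adde_ge0 ?mule_ge0.
- by apply: emeasurable_funD; apply: emeasurable_funM.
- by move=> x _; rewrite mule_ge0.
- exact: emeasurable_funM.
apply: le_trans (leeD (leeD (int_c _ p11 _) (int_c _ p21 _)) (int_c _ p31 _)) _;
  try by rewrite fineK // !le_max lexx ?orbT.
rewrite -!EFinD lee_fin /c -!mulrA -!mulrDr.
have := invr_powR_mul_le fN0 C1 p11 CNlam; have := invr_powR_mul_le fN0 C1 p21 CNlam.
have := invr_powR_mul_le fN0 C1 p31 CNlam => h3 h2 h1.
apply: (@le_trans _ _ (K * (3 * C^-1))%R); first by rewrite ler_pM2l //; lra.
by rewrite mulrA ler_pdivrMr // mul1r mulrC le_max lexx orbT.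
Qed.

Lemma sum3_norm_le_restrict (b1 b2 : T -> bool) p1 p2 p3 v :
  measurable_fun Omega b1 -> measurable_fun Omega b2 -> measurable_fun Omega v ->
  sum3_norm mu mO p1 p2 p3 v <=
    LpO mu mO p1 (v \_ (Omega `&` [set x | b1 x]))
    + LpO mu mO p2 (v \_ (Omega `&` [set x | ~~ b1 x && b2 x]))
    + LpO mu mO p3 (v \_ (Omega `&` [set x | ~~ b1 x && ~~ b2 x])).
Proof.
move=> mb1 mb2 mv.
have mvE (b : T -> bool) : measurable_fun Omega b ->
    measurable_fun Omega (v \_ (Omega `&` [set x | b x])).
  move=> mb; apply: measurable_funS measurableT (subsetT _) _.
  apply/(measurable_restrictT _ (mb mO _ _)).1 => //.
  by apply: measurable_funS mO _ mv => x [].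
apply: ereal_inf_lbound.
exists (v \_ (Omega `&` [set x | b1 x])), (v \_ (Omega `&` [set x | ~~ b1 x && b2 x])),
  (v \_ (Omega `&` [set x | ~~ b1 x && ~~ b2 x])).
split=> [||| x Ox |//]; try apply: mvE => //; try apply: measurable_and => //;
  try exact: measurable_neg.
have memE (b : T -> bool) : (x \in Omega `&` [set x | b x]) = b x.
  by apply/idP/idP => [/set_mem[]|bx] //; exact/mem_set.
rewrite !patchE !memE /point /=.
by case: (b1 x); case: (b2 x); rewrite /= ?addr0 ?add0r.
Qed.

Lemma LpO_restrict_le_min Phi (c p1 p2 p3 p lam : R) (b : T -> bool) v :
  (1 <= p)%R -> (0 < c <= 1)%R -> (0 < lam)%R ->
  (forall t, (0 <= t)%R ->
     (c * Num.min ((t / 2) `^ p1) (Num.min ((t / 2) `^ p2) ((t / 2) `^ p3)))%:E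
       <= Phi t) ->
  measurable_fun Omega b -> measurable_fun Omega v ->
  \int[mu]_(x in Omega) Phi (`|v x| / lam)%R <= 1 ->
  (forall x, b x -> let h := (`|v x| / lam / 2)%R in
     (h `^ p <= Num.min (h `^ p1) (Num.min (h `^ p2) (h `^ p3)))%R) ->
  LpO mu mO p (v \_ (Omega `&` [set x | b x])) <= (2 * lam / c)%:E.
Proof.
move=> p_ge1 c01 lam0 PhiL mb mv int_le1 bmin; have /andP[c0 c1] := c01.
set beta := (2 * lam / c)%R; have beta0 : (0 < beta)%R by rewrite divr_gt0 // mulr_gt0.
have t0 x : (0 <= `|v x| / lam)%R by rewrite divr_ge0 // ltW.
apply: LpO_restrict_le int_le1 _ => //.
- exact: mb.
- exact: lt_le_trans ltr01 p_ge1.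
- move=> x _; apply: le_trans (PhiL _ (t0 x)).
  by rewrite lee_fin mulr_ge0 ?(ltW c0) // !le_min !powR_ge0.
move=> x [_ /bmin hmin]; apply: le_trans (lee_wpmul2l _ (PhiL _ (t0 x))); last first.
  by rewrite lee_fin powR_ge0.
rewrite -EFinM lee_fin.
apply: le_trans (powR_le_mul_powR_div (normr_ge0 (v x)) c01 p_ge1) _.
rewrite (_ : `|v x| / c = beta * (`|v x| / lam / 2))%R; last first.
  by rewrite /beta; field; rewrite !gt_eqF.
rewrite powRM ?(ltW beta0) //; last by rewrite !divr_ge0 // ltW.
rewrite mulrCA; apply: ler_wpM2l; first exact: powR_ge0.
by rewrite ler_pM2l.
Qed.

Lemma sum3_norm_le_luxemburg Phi (c p1 p2 p3 : R) v :
  (1 <= p1)%R -> (1 <= p2)%R -> (1 <= p3)%R -> (0 < c)%R -> (c <= 1)%R ->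
  (forall t, (0 <= t)%R ->
     (c * Num.min ((t / 2) `^ p1) (Num.min ((t / 2) `^ p2) ((t / 2) `^ p3)))%:E
       <= Phi t) ->
  measurable_fun Omega v ->
  sum3_norm mu mO p1 p2 p3 v <= (6 / c)%:E * luxemburg mu Omega Phi v.
Proof.
move=> p11 p21 p31 c0 c1 PhiL mv; have c01 : (0 < c <= 1)%R by rewrite c0 c1.
apply: le_luxemburg => [|lam lam0 int_le1]; first by rewrite divr_gt0.
pose m q x := ((`|v x| / lam / 2) `^ q)%R.
have mm q : measurable_fun Omega (m q).
  apply: measurableT_comp (measurable_powR q) _.
  apply: measurable_funM => //; apply: measurable_funM => //.
  exact: measurableT_comp (@normr_measurable R setT) mv.
pose b1 x := ((m p1 x <= m p2 x) && (m p1 x <= m p3 x))%R.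
pose b2 x := (m p2 x <= m p3 x)%R.
have mb1 : measurable_fun Omega b1.
  by apply: measurable_and; exact: measurable_fun_ler.
have mb2 : measurable_fun Omega b2 by exact: measurable_fun_ler.
apply: le_trans (sum3_norm_le_restrict p1 p2 p3 mb1 mb2 mv) _.
have piece q (b : T -> bool) : (1 <= q)%R -> measurable_fun Omega b ->
    (forall x, b x -> m q x <= Num.min (m p1 x) (Num.min (m p2 x) (m p3 x)))%R ->
    LpO mu mO q (v \_ (Omega `&` [set x | b x])) <= (2 * lam / c)%:E.
  by move=> q1 mb bmin; exact: LpO_restrict_le_min q1 c01 lam0 PhiL mb mv int_le1 bmin.
apply: le_trans (leeD (leeD (piece _ _ p11 mb1 _) (piece _ _ p21 _ _)) (piece _ _ p31 _ _)) _.
- by move=> x /andP[h12 h13]; rewrite !le_min lexx h12 h13.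
- by apply: measurable_and => //; exact: measurable_neg.
- move=> x /andP[]; rewrite /b1 /b2 negb_and -!ltNge => h1 h23 /=.
  rewrite !le_min lexx h23 andbT; case/orP: h1 => h1; lra.
- by apply: measurable_and; exact: measurable_neg.
- move=> x /andP[]; rewrite /b1 /b2 negb_and -!ltNge => h1 h32 /=.
  rewrite !le_min lexx andbT; case/orP: h1 => h1; apply/andP; split; lra.
rewrite -!EFinD lee_fin le_eqVlt; apply/predU1P; left.
by field; rewrite gt_eqF.
Qed.

End orlicz_lebesgue.

(* An unbounded-below set has infimum 0 in this library, which would force
   [p_minus dphi = 1]; so [1 < p_minus dphi] also provides the lower bound. *)
Lemma uniformly_convex_index_ratio (R : realType) (dphi : R -> R) :
  uniformly_convex dphi -> forall t, 0 < t ->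
  p_minus dphi - 1 <= index_ratio dphi t <= p_plus dphi - 1.
Proof.
case=> _ _ _ pm1 ub t t0; set S := [set index_ratio dphi x | x in `]0, +oo[].
have St : S (index_ratio dphi t) by exists t => //; rewrite /= in_itv /= andbT.
have lb : has_lbound S.
  apply: contrapT => nlb; move: pm1.
  by rewrite /p_minus -/S inf_out ?add0r ?ltxx // => -[].
by rewrite /p_minus /p_plus !addrK -/S ge_inf ?ub_le_sup.
Qed.

Lemma Nfunction_dphi_gt0 (R : realType) (phi dphi : R -> R) :
  Nfunction phi dphi -> forall t, 0 < t -> 0 < dphi t.
Proof. by case=> _ _ _ []. Qed.

Section uniformly_convex_phi_delta.
Context {R : realType} (phi dphi : R -> R).
Hypothesis dphi_N : Nfunction phi dphi.
Hypothesis dphi_convex : uniformly_convex dphi.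

Let dphi_gt0 := Nfunction_dphi_gt0 dphi_N.

Let dphi_derivable : forall t, 0 < t -> derivable dphi t 1.
Proof. by case: dphi_convex. Qed.

Let ratio_ge t : 0 < t -> p_minus dphi - 1 <= index_ratio dphi t.
Proof. by move=> /(uniformly_convex_index_ratio dphi_convex) /andP[]. Qed.

Let ratio_le t : 0 < t -> index_ratio dphi t <= p_plus dphi - 1.
Proof. by move=> /(uniformly_convex_index_ratio dphi_convex) /andP[]. Qed.

Lemma uniformly_convex_p_minus_gt1 : 1 < p_minus dphi.
Proof. by case: dphi_convex. Qed.

Let pm1_ge0 : 0 <= p_minus dphi - 1.
Proof. by rewrite subr_ge0 ltW // uniformly_convex_p_minus_gt1. Qed.

Lemma uniformly_convex_p_plus_ge1 : 1 <= p_plus dphi.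
Proof.
rewrite -subr_ge0 (le_trans pm1_ge0) //.
exact: le_trans (ratio_ge ltr01) (ratio_le ltr01).
Qed.

Variables dm dp : R.
Hypotheses (dm_gt0 : 0 < dm) (dm_le1 : dm <= 1) (dp_ge1 : 1 <= dp).

Lemma uniformly_convex_phi_delta_le t : 0 <= t ->
  (phi_delta dphi dm dp t
     <= (dphi 1 * (t `^ p_minus dphi + t `^ p_plus dphi + t `^ 2))%:E)%E.
Proof.
move=> t0; have := phi_delta_le dphi_gt0 dphi_derivable ratio_ge ratio_le
  dm_gt0 dm_le1 dp_ge1 pm1_ge0 t0.
by rewrite !subrK.
Qed.

Lemma uniformly_convex_phi_delta_ge t : 0 <= t ->
  ((dphi 1 * Num.min ((t / 2) `^ p_minus dphi)
       (Num.min ((t / 2) `^ p_plus dphi) ((t / 2) `^ 2)))%:E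
     <= phi_delta dphi dm dp t)%E.
Proof.
move=> t0; have := phi_delta_ge dphi_gt0 dphi_derivable ratio_ge ratio_le
  dm_gt0 dm_le1 dp_ge1 pm1_ge0 t0.
by rewrite !subrK.
Qed.

End uniformly_convex_phi_delta.

Theorem lemmaA7 (R : realType) (d : measure_display) (T : measurableType d)
    (mu : {measure set T -> \bar R}) (Omega : set T) (mO : measurable Omega)
    (phi dphi : R -> R) :
  Nfunction phi dphi -> uniformly_convex dphi ->
  exists C : R, 0 < C /\
    forall dm dp : R, 0 < dm -> dm <= 1 -> 1 <= dp ->
    forall v : T -> R, measurable_fun Omega v ->
      (luxemburg mu Omega (phi_delta dphi dm dp) v
         <= C%:E * cap3_norm mu mO (p_minus dphi) (p_plus dphi) 2 v)%E /\
      (sum3_norm mu mO (p_minus dphi) (p_plus dphi) 2 v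
         <= C%:E * luxemburg mu Omega (phi_delta dphi dm dp) v)%E.
Proof.
move=> dphi_N dphi_convex.
have pm_ge1 := ltW (uniformly_convex_p_minus_gt1 dphi_convex).
have pp_ge1 := uniformly_convex_p_plus_ge1 dphi_convex.
set K := dphi 1; have K0 : 0 < K := Nfunction_dphi_gt0 dphi_N ltr01.
set c := Num.min K 1; have c0 : 0 < c by rewrite lt_min K0 ltr01.
have c1 : c <= 1 by rewrite ge_min lexx orbT.
exists (Num.max (Num.max 1 (3 * K)) (6 / c)); split=> [|dm dp dm0 dm1 dp1 v mv].
  by rewrite !lt_max ltr01.
have Phi_le := uniformly_convex_phi_delta_le dphi_N dphi_convex dm0 dm1 dp1.
have Phi_ge := uniformly_convex_phi_delta_ge dphi_N dphi_convex dm0 dm1 dp1.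
have Phi0 t : 0 <= t -> (0 <= phi_delta dphi dm dp t)%E.
  move=> t0; rewrite (le_trans _ (Phi_ge t t0)) // lee_fin.
  by rewrite mulr_ge0 ?(ltW K0) // !le_min !powR_ge0.
split.
- apply: le_trans (luxemburg_le_cap3_norm mu mO pm_ge1 pp_ge1 (ler1n _ 2) K0 Phi0 Phi_le mv) _.
  by rewrite lee_wpmul2r ?cap3_norm_ge0 // lee_fin le_max lexx.
- apply: le_trans (sum3_norm_le_luxemburg mu mO pm_ge1 pp_ge1 (ler1n _ 2) c0 c1 _ mv) _.
    move=> t t0; apply: le_trans (Phi_ge t t0); rewrite lee_fin ler_wpM2r ?ge_min ?lexx //.
    by rewrite !le_min !powR_ge0.
  by rewrite lee_wpmul2r ?luxemburg_ge0 // lee_fin le_max lexx orbT.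
Qed.
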